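(* Let $X$ be an extensible marked Dynkin diagram with $d$ nodes, and let $\gamma=(x,y)\in\mathcal H_2$ with $|\gamma|_X=0$. Let $l=\max(\ell(x),d)$ and $r=\ell(y)$. Then there exist integers $p_i$ ($1\le i\le l-1$), $q_j$ ($1\le j\le r-1$) and $s$ such that for all $n\ge l+r$, $$\gamma^{(n)}=\sum_{i=1}^{l-1}p_i\alpha_i^{(n)}+\sum_{i=l}^{n-r+1}s\,\alpha_i^{(n)}+\sum_{i=n-r+2}^{n}q_{n-i+1}\alpha_i^{(n)}.$$
   Context: A marked Dynkin diagram $X$ has nodes $1,\dots,d$ with node $d$ distinguished and symmetrizable generalized Cartan matrix $C(X)$. For $n\ge d$, $X_n$ is obtained by attaching a simply-laced chain of new nodes $d+1,\dots,n$ to node $d$ (so $C(X_n)$ has $C(X)$ as upper-left block, $2$ on the remaining diagonal, $-1$ in positions $(i,i+1),(i+1,i)$ for $d\le i<n$, $0$ elsewhere); $X_{d-1}$ is $X$ with node $d$ deleted. $\det(Y)$ is the determinant of the generalized Cartan matrix of $Y$. The sequence $\det(X_n)$, $n\ge d$, is arithmetic with common difference $\Delta$; $X$ is extensible if $\Delta\ne0$, $\det(X)\ne0$ and $\gcd(\Delta,\det X)=1$. For $\mathfrak g(X_n)$: simple roots $\alpha_i^{(n)}$, fundamental weights $\omega_i^{(n)}$, $\overline{\omega}_i^{(n)}=\omega_{n-i+1}^{(n)}$. $\mathcal H_1$ is the set of finitely supported integer sequences, $\ell(x)=\max\{i:x_i\ne0\}$, $\mathcal H_2=\mathcal H_1\times\mathcal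 H_1$; for $\gamma=(x,y)$ and $n\ge\ell(y)+\max(d,\ell(x))$, $\gamma^{(n)}=\sum_ix_i\omega_i^{(n)}+\sum_iy_i\overline{\omega}_i^{(n)}$. Integers $a_i$: for $1\le i\le d$, $a_i=\det(X)(C(X)^{-1})_{d\,i}$; for $i>d$, $a_i=\det(X_{i-1})$. $|\gamma|_X=\sum_ia_ix_i-\Delta\sum_i i\,y_i$. *)

From HB Require Import structures.
From mathcomp Require Import all_boot all_order all_algebra.
Set Implicit Arguments. Unset Strict Implicit. Unset Printing Implicit Defensive.
Import Order.TTheory GRing.Theory Num.Theory.
Local Open Scope ring_scope.

(* A marked Dynkin diagram X with d nodes is given by d and a function
   cX : nat -> nat -> int; the (0-indexed) entries cX i j with i, j < d form
   the generalized Cartan matrix C(X).  Node d (1-indexed) is the last index,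
   d.-1 in 0-indexed form. *)

Definition cartanX (d : nat) (cX : nat -> nat -> int) : 'M[int]_d :=
  \matrix_(i < d, j < d) cX i j.

Definition is_GCM (n : nat) (A : 'M[int]_n) : Prop :=
  (forall i, A i i = 2) /\
  (forall i j, i != j -> A i j <= 0) /\
  (forall i j, A i j = 0 <-> A j i = 0).

Definition symmetrizable (n : nat) (A : 'M[int]_n) : Prop :=
  exists eps : 'I_n -> rat, (forall i, 0 < eps i) /\
    (forall i j, eps i * (A i j)%:~R = eps j * (A j i)%:~R).

(* C(X_n) (0-indexed entries), X_n = X with a simply-laced chain of new nodes
   d+1..n attached at node d.  For n < d this is the leading principal
   submatrix; in particular extmx d cX d.-1 is C(X_{d-1}). *)
Definition ext_entry (d : nat) (cX : nat -> nat -> int) (i j : nat) : int :=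
  if (i < d)%N && (j < d)%N then cX i j
  else if i == j then 2
  else if ((i.+1 == j) || (j.+1 == i)) && (d.-1 <= minn i j)%N then -1
  else 0.

Definition extmx (d : nat) (cX : nat -> nat -> int) (n : nat) : 'M[int]_n :=
  \matrix_(i < n, j < n) ext_entry d cX i j.

Definition detX (d : nat) (cX : nat -> nat -> int) (n : nat) : int :=
  \det (extmx d cX n).

(* common difference Delta of the arithmetic sequence det(X_n), n >= d *)
Definition DeltaX (d : nat) (cX : nat -> nat -> int) : int :=
  detX d cX d.+1 - detX d cX d.

Definition extensible (d : nat) (cX : nat -> nat -> int) : Prop :=
  DeltaX d cX != 0 /\ detX d cX d != 0 /\ coprimez (DeltaX d cX) (detX d cX d).

(* The integers a_i, i >= 1 (1-indexed).
   For 1 <= i <= d : det(X) (C(X)^{-1})_{d,i} = adj(C(X))_{d,i}. *)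
Definition acoef (d : nat) (cX : nat -> nat -> int) (i : nat) : int :=
  if (i <= d)%N then
    (match d as d' return 'M[int]_d' -> int with
     | 0 => fun _ => 0
     | d'.+1 => fun A => \adj A ord_max (inord i.-1)
     end) (cartanX d cX)
  else detX d cX i.-1.

(* Elements of H_1: finitely supported integer sequences (x_1, x_2, ...),
   represented by a list; x_i = nth 0 x (i-1) for i >= 1. *)
Definition hcoef (x : seq int) (i : nat) : int :=
  if i is k.+1 then nth 0 x k else 0.

Definition ell (x : seq int) : nat := (
  \max_(k < size x | nth (0:int) x k != (0:int)) k.+1)%N.

Definition gammaNormX (d : nat) (cX : nat -> nat -> int) (x y : seq int) : int :=
  \sum_(k < size x) acoef d cX k.+1 * hcoef x k.+1
  - DeltaX d cX * \sum_(k < size y) (k.+1)%:Z * hcoef y k.+1.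

(* Coefficient of omega_j^{(n)} (j 1-indexed) in gamma^{(n)} =
   sum_i x_i omega_i + sum_i y_i omega_{n-i+1}. *)
Definition gamma_coef (x y : seq int) (n j : nat) : int :=
  hcoef x j + (if (1 <= j <= n)%N then hcoef y (n - j).+1 else 0).

From HB Require Import structures.
From mathcomp Require Import all_boot all_order all_algebra.
From mathcomp Require Import zify ring.
Import Order.TTheory GRing.Theory Num.Theory.
Local Open Scope ring_scope.

(* On the chain the rows of C(X_n) are second differences, so the coefficients
   of gamma^(n) in the simple roots are piecewise linear: with W = sum_m m y_m
   they are L(k) = W - sum_m (m - k)^+ x_m on the left and R(k) = sum_m min(k, m) y_m
   counted from the right end, and both equal W in the middle once n >= l + r.
   On X itself the coefficients u must solve C(X) u = b with u_d = L(d).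
   Cramer's rule gives det(X) u = adj(C(X)) b, and since a_i = det(X) +
   (i - d - 1) Delta for i > d, the condition |gamma|_X = 0 says exactly that
   the last entry of adj(C(X)) b is det(X) L(d).  For integrality, C(X_{d+1})
   maps the bordered vector (det(X) u, det(X) L(d+1)) to a multiple of det(X),
   and det(X_{d+1}) = det(X) + Delta is coprime to det(X). *)

Lemma sum_mul_delta (R : pzSemiRingType) (N k : nat) (c : nat -> R) :
  \sum_(i < N) c i * (i == k :> nat)%:R = if (k < N)%N then c k else 0.
Proof.
rewrite -(big_ord1_eq (@GRing.add R) c k N) [RHS]big_mkcond.
by apply: eq_bigr => i _; rewrite mulr_natr mulrb.
Qed.

Lemma hcoef_gt_ell (a : seq int) (k : nat) : (ell a < k)%N -> hcoef a k = 0.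
Proof.
case: k => [//|k] /= lt_ell_k.
have [lt_k_a|] := ltnP k (size a); last exact: nth_default.
apply/eqP; apply: contraLR lt_ell_k => nz_ak; rewrite -leqNgt.
exact: (@leq_bigmax_cond _ (fun i : 'I_(size a) => a`_i != 0) (fun i => i.+1) (Ordinal lt_k_a)).
Qed.

Lemma sum_hcoef_widen (a : seq int) (f : nat -> int) (N : nat) : (size a <= N)%N ->
  \sum_(k < size a) f k * hcoef a k.+1 = \sum_(k < N) f k * hcoef a k.+1.
Proof.
move=> le_a_N; rewrite (big_ord_widen N (fun k => f k * hcoef a k.+1) le_a_N) big_mkcond.
by apply: eq_bigr => k _; case: ltnP => // le_a_k; rewrite /= nth_default ?mulr0.
Qed.

Lemma sum_hcoef_head (a : seq int) (f : nat -> int) (N : nat) :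
  \sum_(k < N) f k * hcoef a k.+1 =
  \sum_(k < size a) (if (k < N)%N then f k else 0) * hcoef a k.+1.
Proof.
rewrite (@sum_hcoef_widen a (fun k => if (k < N)%N then f k else 0) (size a + N)) ?leq_addr //.
rewrite (big_ord_widen (size a + N) (fun k => f k * hcoef a k.+1) (leq_addl _ _)) big_mkcond.
by apply: eq_bigr => k _; case: ifP; rewrite ?mul0r.
Qed.

Definition second_diff (f : nat -> int) (k : nat) : int := 2 * f k.+1 - f k - f k.+2.

Definition weight (a : seq int) : int := \sum_(k < size a) k.+1%:Z * hcoef a k.+1.

Definition ramp (a : seq int) (k : nat) : int :=
  \sum_(m < size a) (minn k m.+1)%:Z * hcoef a m.+1.

Lemma ramp0 (a : seq int) : ramp a 0 = 0.
Proof. by rewrite /ramp big1 // => m _; rewrite min0n mul0r. Qed.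

Lemma ramp_ge_ell (a : seq int) (k : nat) : (ell a <= k)%N -> ramp a k = weight a.
Proof.
move=> le_ell_k; apply: eq_bigr => m _.
have [lt_ell_m|le_m_ell] := ltnP (ell a) m.+1; first by rewrite hcoef_gt_ell ?mulr0.
by rewrite (minn_idPr (leq_trans le_m_ell le_ell_k)).
Qed.

Lemma second_diff_ramp (a : seq int) (k : nat) : second_diff (ramp a) k = hcoef a k.+1.
Proof.
rewrite /second_diff /ramp mulr_sumr -!sumrB.
transitivity (\sum_(m < size a) hcoef a m.+1 * (m == k :> nat)%:R).
  apply: eq_bigr => m _; rewrite mulrA -!mulrBl mulrC; congr (_ * _).
  by case: eqVneq => [->|ne_mk]; lia.
by rewrite sum_mul_delta; case: ltnP => // le_a_k; rewrite /= nth_default.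
Qed.

Definition cartanA (i j : nat) : int :=
  if i == j then 2 else if (i.+1 == j) || (j.+1 == i) then -1 else 0.

Lemma ext_entry_cartanA (d : nat) (cX : nat -> nat -> int) (i j : nat) :
  (d <= maxn i j)%N -> ext_entry d cX i j = cartanA i j.
Proof.
rewrite /ext_entry /cartanA leq_max => le_d.
have -> : ((i < d) && (j < d))%N = false by case/orP: le_d => le_d; lia.
case: eqP => // _; case adj: (_ || _) => //=.
by have -> : (d.-1 <= minn i j)%N by case/orP: adj => /eqP; lia.
Qed.

Lemma cartanA_delta (i j : nat) : (0 < j)%N ->
  cartanA j i = 2 * (i == j)%:R - (i == j.-1)%:R - (i == j.+1)%:R.
Proof. by rewrite /cartanA; case: j => // j _; do ! case: eqVneq => ? //=; lia. Qed.

Lemma minor_lastmx (R : Type) (f : nat -> nat -> R) (n : nat) :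
  row' ord_max (col' ord_max (\matrix_(i < n.+1, j < n.+1) f i j)) =
  \matrix_(i < n, j < n) f i j.
Proof. by apply/matrixP => i j; rewrite !mxE !lift_max. Qed.

Lemma det_chain_rec (R : comPzRingType) (f : nat -> nat -> R) (n : nat) :
  (forall j, (j < n)%N -> f n.+1 j = 0) -> (forall i, (i < n)%N -> f i n.+1 = 0) ->
  f n.+1 n = -1 -> f n n.+1 = -1 -> f n.+1 n.+1 = 2 ->
  \det (\matrix_(i < n.+2, j < n.+2) f i j) =
  2 * \det (\matrix_(i < n.+1, j < n.+1) f i j) - \det (\matrix_(i < n, j < n) f i j).
Proof.
move=> row0 col0 sub super diag.
rewrite (expand_det_row _ ord_max) !big_ord_recr /= big1 ?add0r; last first.
  by move=> j _; rewrite mxE [f _ _](row0 j) ?mul0r.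
rewrite !mxE [f _ ord_max]diag [f _ (widen_ord _ _)]sub /cofactor minor_lastmx.
set M' := row' _ _.
have -> : \det M' = - \det (\matrix_(i < n, j < n) f i j).
  rewrite (expand_det_col _ ord_max) big_ord_recr /= big1 ?add0r; last first.
    by move=> i _; rewrite !mxE lift_max /= /bump leqnn [f _ _](col0 i) ?mul0r.
  rewrite !mxE lift_max /= /bump leqnn [f _ _]super /cofactor.
  have -> : row' ord_max (col' ord_max M') = \matrix_(i < n, j < n) f i j.
    apply/matrixP => i j; rewrite !mxE /=; congr f; rewrite /bump.
      by rewrite (leqNgt n i) ltn_ord /= !add0n ltnNge (ltnW (ltn_ord i)).
    by rewrite (leqNgt n j) ltn_ord /= add0n leqNgt ltn_ord.
  by rewrite -signr_odd addnn odd_double mulN1r mul1r.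
have sgn_sub : (-1) ^+ (n.+1 + n) = -1 :> R by rewrite -signr_odd addSn addnn /= odd_double.
have sgn_diag : (-1) ^+ (n.+1 + n.+1) = 1 :> R by rewrite -signr_odd addnn odd_double.
by rewrite /= sgn_sub sgn_diag !mul1r !mulN1r opprK addrC.
Qed.

Lemma extmx_cartanX (d : nat) (cX : nat -> nat -> int) : extmx d cX d = cartanX d cX.
Proof. by apply/matrixP => i j; rewrite !mxE /ext_entry !ltn_ord. Qed.

Section DetChain.
Variables (d : nat) (cX : nat -> nat -> int).

Lemma detX_rec (n : nat) : (d <= n.+1)%N ->
  detX d cX n.+2 = 2 * detX d cX n.+1 - detX d cX n.
Proof.
move=> le_d; have chain i j : maxn i j = n.+1 -> ext_entry d cX i j = cartanA i j.
  by move=> max_ij; rewrite ext_entry_cartanA // max_ij.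
apply: det_chain_rec => [j lt_j|i lt_i|||]; rewrite chain /cartanA; try lia.
- by rewrite !ifN //; lia.
- by rewrite !ifN //; lia.
- by rewrite eqxx orbT ifN //; lia.
- by rewrite eqxx ifN //; lia.
- by rewrite eqxx.
Qed.

Lemma detX_addn (m : nat) : detX d cX (d + m) = detX d cX d + m%:Z * DeltaX d cX.
Proof.
suff : detX d cX (d + m) = detX d cX d + m%:Z * DeltaX d cX /\
       detX d cX (d + m.+1) = detX d cX d + m.+1%:Z * DeltaX d cX by case.
elim: m => [|m [IHm IHmS]]; first by rewrite addn0 addn1 mul1r /DeltaX; split; ring.
split=> //; rewrite !addnS detX_rec; last exact/leqW/leq_addr.
by rewrite -addnS IHmS IHm !intS; ring.
Qed.

Lemma detX_pred : (0 < d)%N -> detX d cX d.-1 = detX d cX d - DeltaX d cX.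
Proof.
move=> d_gt0; rewrite /DeltaX.
by have := @detX_rec d.-1; rewrite prednK // => /(_ (leqnn d)) ->; ring.
Qed.

End DetChain.

Lemma dvdz_col_coprime_det (n : nat) (M : 'M[int]_n) (w : 'cV[int]_n) (D : int) :
  coprimez D (\det M) -> (forall k, (D %| (M *m w) k ord0)%Z) -> forall i, (D %| w i ord0)%Z.
Proof.
move=> coprime_D dvd_Mw i; rewrite -(Gauss_dvdzr _ coprime_D).
have := congr1 (fun B : 'cV_n => B i ord0) (mulmxA (\adj M) M w).
rewrite mul_adj_mx mul_scalar_mx !mxE => <-.
by apply: rpred_sum => k _; apply: dvdz_mull.
Qed.

Lemma sum_ord_extend (V : nmodType) (N : nat) (F : nat -> V) :
  F N = 0 -> \sum_(i < N) F i = \sum_(i < N.+1) F i.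
Proof. by move=> FN0; rewrite big_ord_recr /= FN0 addr0. Qed.

Lemma sum_ext_entry_chain (d : nat) (cX : nat -> nat -> int) (c : nat -> int) (N j : nat) :
  (d <= j)%N -> (0 < j < N)%N -> c N = 0 ->
  \sum_(i < N) c i * ext_entry d cX j i = 2 * c j - c j.-1 - c j.+1.
Proof.
move=> le_d_j /andP[j_gt0 lt_j_N] cN0.
rewrite (@sum_ord_extend _ N (fun i => c i * ext_entry d cX j i)) ?cN0 ?mul0r //.
under eq_bigr => i _ do rewrite ext_entry_cartanA ?leq_max ?le_d_j // cartanA_delta // !mulrBr mulrCA.
by rewrite !sumrB -mulr_sumr !sum_mul_delta !ifT //; lia.
Qed.

Lemma sum_ext_entry_head (d : nat) (cX : nat -> nat -> int) (c : nat -> int) (N j : nat) :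
  (j < d <= N)%N -> c N = 0 ->
  \sum_(i < N) c i * ext_entry d cX j i = \sum_(i < d) c i * cX j i - (j == d.-1)%:R * c d.
Proof.
move=> /andP[lt_j_d le_d_N] cN0.
rewrite (@sum_ord_extend _ N (fun i => c i * ext_entry d cX j i)) ?cN0 ?mul0r //.
have entry i : ext_entry d cX j i =
    (if (i < d)%N then cX j i else 0) - (j == d.-1)%:R * (i == d)%:R.
  have [lt_i_d|le_d_i] := ltnP i d.
    by rewrite /ext_entry lt_j_d lt_i_d (ltn_eqF lt_i_d) mulr0 subr0.
  rewrite ext_entry_cartanA ?leq_max ?le_d_i ?orbT // /cartanA.
  by do ! case: eqVneq => ? //=; lia.
under eq_bigr => i _ do rewrite entry mulrBr mulrCA.
rewrite sumrB -mulr_sumr sum_mul_delta ltnS le_d_N.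
rewrite (big_ord_widen N.+1 (fun i => c i * cX j i) (leqW le_d_N)) [in RHS]big_mkcond.
by congr (_ - _); apply: eq_bigr => i _; case: ifP; rewrite ?mulr0.
Qed.

Section CoefficientVector.
Variables (d' : nat) (cX : nat -> nat -> int) (x y : seq int).
Hypothesis ext : extensible d'.+1 cX.
Hypothesis norm : gammaNormX d'.+1 cX x y = 0.

Local Notation d := d'.+1.
Local Notation A := (cartanX d cX).
Local Notation D := (detX d cX d).
Local Notation Delta := (DeltaX d cX).

(* L(k) = W - sum_m (m - k)^+ x_m, since (m - k)^+ = m - min(k, m). *)
Definition left_ramp (k : nat) : int := weight y - weight x + ramp x k.

Lemma left_ramp_ge_ell (k : nat) : (ell x <= k)%N -> left_ramp k = weight y.
Proof. by move=> le_ell_k; rewrite /left_ramp ramp_ge_ell // subrK. Qed.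

Lemma second_diff_left_ramp (k : nat) : second_diff left_ramp k = hcoef x k.+1.
Proof. by rewrite -second_diff_ramp /second_diff /left_ramp; ring. Qed.

(* For k >= d, a_(k+1) = det(X_k) = D + (k - d) Delta; the affine terms below
   reproduce this and cancel for k < d. *)
Lemma acoef_split (k : nat) :
  acoef d cX k.+1 = (if (k < d)%N then acoef d cX k.+1 else 0)
    + Delta * k.+1%:Z - D * (minn d k.+1)%:Z + (D - Delta) * (minn d.+1 k.+1)%:Z.
Proof.
have [lt_k_d|le_d_k] := ltnP k d.
  by rewrite (minn_idPr lt_k_d) (minn_idPr (leqW lt_k_d)); ring.
have [m ->] : exists m, k = (d + m)%N by exists (k - d)%N; rewrite subnKC.
rewrite /acoef ltnS leqNgt ltnS leq_addr /= detX_addn.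
have le_dS : (d.+1 <= (d + m).+1)%N by rewrite ltnS leq_addr.
by rewrite (minn_idPl (leqW (leq_addr m d))) (minn_idPl le_dS) !intS !PoszD; ring.
Qed.

Lemma acoef_head (k : nat) : (k < d)%N -> acoef d cX k.+1 = \adj A ord_max (inord k).
Proof. by move=> lt_k_d; rewrite /acoef lt_k_d. Qed.

Lemma adj_cartanX_last : \adj A ord_max ord_max = D - Delta.
Proof.
rewrite mxE /cofactor -signr_odd addnn odd_double mul1r -detX_pred //.
congr (\det _); apply/matrixP => i j; rewrite !mxE !lift_max /ext_entry /=.
by rewrite !(ltn_trans (ltn_ord _) (ltnSn d')).
Qed.

Lemma head_norm_identity :
  \sum_(k < d) acoef d cX k.+1 * hcoef x k.+1 + (D - Delta) * left_ramp d.+1 =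
  D * left_ramp d.
Proof.
have split_norm : \sum_(k < size x) acoef d cX k.+1 * hcoef x k.+1 =
    \sum_(k < d) acoef d cX k.+1 * hcoef x k.+1
    + Delta * weight x - D * ramp x d + (D - Delta) * ramp x d.+1.
  rewrite [in RHS](sum_hcoef_head x (fun k => acoef d cX k.+1)) /weight /ramp.
  rewrite !mulr_sumr -big_split -sumrB -big_split /=.
  by apply: eq_bigr => k _; rewrite {1}acoef_split; ring.
move: norm; rewrite /gammaNormX split_norm -/(weight y) /left_ramp => norm'.
lia.
Qed.

Definition head_rhs (k : nat) : int := hcoef x k.+1 + (k == d')%:R * left_ramp d.+1.

Definition cramer_num (i : nat) : int := \sum_(k < d) \adj A (inord i) k * head_rhs k.

Lemma cramer_num_solves (j : nat) : (j < d)%N ->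
  \sum_(i < d) cramer_num i * cX j i = D * head_rhs j.
Proof.
move=> lt_j_d; rewrite /detX extmx_cartanX.
have := congr1 (fun B : 'cV_d => B (inord j) ord0) (mulmxA A (\adj A) (\col_k head_rhs k)).
rewrite mul_mx_adj mul_scalar_mx !mxE inordK // => <-.
apply: eq_bigr => i _; rewrite mulrC !mxE inordK //; congr (_ * _).
by rewrite /cramer_num inord_val; apply: eq_bigr => k _; congr (_ * _); rewrite mxE.
Qed.

Lemma cramer_num_last : cramer_num d' = D * left_ramp d.
Proof.
have max_eq : inord d' = ord_max :> 'I_d by apply/val_inj; rewrite /= inordK.
rewrite -head_norm_identity /cramer_num max_eq !big_ord_recr /= acoef_head // max_eq.
rewrite adj_cartanX_last /head_rhs eqxx mul1r mulrDr addrA; congr (_ + _ + _).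
apply: eq_bigr => i _; rewrite (ltn_eqF (ltn_ord i)) mul0r addr0 acoef_head ?leqW //.
by congr (\adj A _ _ * _); apply/val_inj; rewrite /= inordK ?leqW.
Qed.

Lemma dvdz_cramer_num (i : nat) : (i < d)%N -> (D %| cramer_num i)%Z.
Proof.
move=> lt_i_d.
pose bord k := if (k < d)%N then cramer_num k else if k == d then D * left_ramp d.+1 else 0.
have coprime_D : coprimez D (\det (extmx d cX d.+1)).
  have [_ [_ coprime_Delta]] := ext.
  have detS : detX d cX d.+1 = Delta + D by rewrite subrK.
  by rewrite -/(detX d cX d.+1) detS /coprimez gcdzDr -/(coprimez D Delta) coprimez_sym.
have := @dvdz_col_coprime_det _ _ (\col_k bord k) _ coprime_D _ (inord i).
rewrite mxE inordK /bord ?lt_i_d; [apply | exact: leqW] => k.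
rewrite mxE (eq_bigr (fun j : 'I_d.+1 => bord j * ext_entry d cX k j)); last first.
  by move=> j _; rewrite !mxE mulrC.
have bord_end : bord d.+1 = 0 by rewrite /bord ltnNge leqnSn /= gtn_eqF.
have [lt_k_d|le_d_k] := ltnP k d.
  rewrite sum_ext_entry_head ?lt_k_d ?leqnSn //.
  under eq_bigr => j _ do rewrite /bord ltn_ord.
  rewrite cramer_num_solves // /bord ltnn eqxx.
  by apply: rpredB; [exact: dvdz_mulr | exact/dvdz_mull/dvdz_mulr].
have -> : k = ord_max :> 'I_d.+1 by apply/val_inj/eqP; rewrite eqn_leq le_d_k -ltnS ltn_ord.
rewrite sum_ext_entry_chain //= bord_end subr0 /bord ltnn eqxx ltnSn cramer_num_last.
by apply: rpredB; [exact/dvdz_mull/dvdz_mulr | exact: dvdz_mulr].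
Qed.

Lemma detX_neq0 : D != 0.
Proof. by case: ext => _ []. Qed.

Definition head_coef (i : nat) : int := (cramer_num i %/ D)%Z.

Lemma head_coef_solves (j : nat) : (j < d)%N ->
  \sum_(i < d) head_coef i * cX j i = head_rhs j.
Proof.
move=> lt_j_d; apply: (mulfI detX_neq0); rewrite -cramer_num_solves // mulr_sumr.
by apply: eq_bigr => i _; rewrite mulrA [D * _]mulrC divzK ?dvdz_cramer_num.
Qed.

Lemma head_coef_last : head_coef d' = left_ramp d.
Proof. by rewrite /head_coef cramer_num_last mulKz ?detX_neq0. Qed.

Local Notation l := (maxn (ell x) d).
Local Notation r := (ell y).

Definition left_coef (k : nat) : int := if (k <= d)%N then head_coef k.-1 else left_ramp k.

(* Coefficient of alpha_(i+1)^(n); the index i = n lies outside the matrix and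
   the value there is 0, which makes the last row a full second difference. *)
Definition chain_coef (n i : nat) : int :=
  if (i.+1 <= l - 1)%N then left_coef i.+1
  else if (i.+1 <= n - r + 1)%N then weight y else ramp y (n - i).

Lemma chain_coef_head (n i : nat) : (l + r <= n)%N -> (i < d)%N -> chain_coef n i = head_coef i.
Proof.
move=> le_lr_n lt_i_d; rewrite /chain_coef /left_coef lt_i_d /=.
case: ifP => // not_lt_l; rewrite ifT; last by lia.
have -> : i = d' by lia.
by rewrite head_coef_last left_ramp_ge_ell //; lia.
Qed.

Lemma chain_coef_left (n i : nat) : (d' <= i)%N -> (i <= n - r)%N ->
  chain_coef n i = left_ramp i.+1.
Proof.
move=> le_d_i le_i_nr; rewrite /chain_coef /left_coef.
case: ifP => [_|not_lt_l]; last by rewrite ifT ?left_ramp_ge_ell //; lia.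
case: leqP => // le_i_d; have -> : i = d' by lia.
exact: head_coef_last.
Qed.

Lemma chain_coef_right (n i : nat) : (l + r <= n)%N -> (l <= i.+1)%N -> (i <= n)%N ->
  chain_coef n i = ramp y (n - i).
Proof.
move=> le_lr_n le_l_i le_i_n; rewrite /chain_coef ifN; last by lia.
by case: ifP => // le_i_nr; rewrite ramp_ge_ell //; lia.
Qed.

Lemma gamma_coef_chain (n j : nat) : (l + r <= n)%N -> (j < n)%N ->
  gamma_coef x y n j.+1 = \sum_(i < n) chain_coef n i * ext_entry d cX j i.
Proof.
move=> le_lr_n lt_j_n.
have coef_end : chain_coef n n = 0 by rewrite chain_coef_right ?subnn ?ramp0 //; lia.
rewrite /gamma_coef ifT; last by rewrite ltn0Sn lt_j_n.
have [lt_j_d|le_d_j] := ltnP j d.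
  have le_d_n : (d <= n)%N by lia.
  rewrite sum_ext_entry_head ?lt_j_d ?le_d_n //.
  under eq_bigr => i _ do rewrite chain_coef_head ?ltn_ord //.
  rewrite head_coef_solves // chain_coef_left /head_rhs ?addrK; try lia.
  by rewrite [hcoef y _]hcoef_gt_ell ?addr0 //; lia.
rewrite sum_ext_entry_chain //; last by lia.
have [le_j_nr|lt_nr_j] := leqP j.+1 (n - r).
  rewrite !chain_coef_left ?prednK; try lia.
  by rewrite -second_diff_left_ramp [hcoef y _]hcoef_gt_ell ?addr0 //; lia.
rewrite !chain_coef_right; try lia.
have [-> ->] : (n - j = (n - j.+1).+1 /\ n - j.-1 = (n - j.+1).+2)%N by lia.
rewrite -(second_diff_ramp y) [hcoef x _]hcoef_gt_ell /second_diff; [ring | lia].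
Qed.

End CoefficientVector.

Theorem proposition4p1 (d : nat) (cX : nat -> nat -> int) (x y : seq int) :
  (0 < d)%N ->
  is_GCM (cartanX d cX) ->
  symmetrizable (cartanX d cX) ->
  extensible d cX ->
  gammaNormX d cX x y = 0 ->
  let l := maxn (ell x) d in
  let r := ell y in
  exists (p q : nat -> int) (s : int),
    forall n : nat, (l + r <= n)%N ->
      forall j : 'I_n,
        gamma_coef x y n j.+1 =
        \sum_(i < n)
           (if (i.+1 <= l - 1)%N then p i.+1
            else if (i.+1 <= n - r + 1)%N then s
            else q (n - i.+1 + 1)%N) * extmx d cX n j i.
Proof.
case: d => // d' _ _ _ ext norm l r.
exists (left_coef d' cX x y), (ramp y), (weight y) => n le_lr_n j.
rewrite (@gamma_coef_chain d' cX x y ext norm n j le_lr_n (ltn_ord j)).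
apply: eq_bigr => i _; rewrite mxE /chain_coef; congr (_ * _).
by do 2 case: ifP => // _; rewrite addn1 subnSK.
Qed.
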